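(* Fix $L\ge20$. For any pattern $(\mathbf a,\mathbf e)$ there exists $S\subseteq V(\Gamma)$ such that $p((\mathbf a,\mathbf e)_S)\ge p(\mathbf a,\mathbf e)-150L\sqrt d$ and, for every $(i,w)\in S$, \[\sum_{(i',w')\in N_\Gamma(i,w)\cap S}\frac{a_{i,w}a_{i',w'}}{n}\,b(\epsilon_{i,w,i',w'})\ge\frac L{10}\,a_{i,w}\log\Big(\frac{en}{a_{i,w}}\Big),\] where the right side is interpreted as $0$ when $a_{i,w}=0$.
   Context: $d\ge2$, $H$ is a $d$-regular graph on $[h]$. $D^{>0}=\{2^k/\sqrt{nh}:k\in\mathbb{Z},k\ge0\}$; $\Gamma$ is the graph on $[h]\times D^{>0}$ with $(i,w)\sim_\Gamma(i',w')$ iff $ii'\in E(H)$ and $w/w'\in(d^{-1/2},d^{1/2})$. A pattern is $(\mathbf a,\mathbf e)$: nonnegative integers $a_{i,w}$ with $\sum_wa_{i,w}\le n$ for each $i$, $\sum w^2a_{i,w}\le10$, some $w_0\in D^{>0}$ with $a_{i,w}=0$ unless $w_0\le w\le dw_0$; integers $e_{i,w,i',w'}$ for edges of $\Gamma$ (symmetric) with $0\le e\le\min(a_{i,w},a_{i',w'})$. Potency $p(\mathbf a,\mathbf e)=|\sum_{(i,w)(i',w')\in E(\Gamma)}ww'(e_{i,w,i',w'}-a_{i,w}a_{i',w'}/n)|$. Sub-pattern $(\mathbf a,\mathbf e)_S$: keep $a_{i,w}$ for $(i,w)\in S$ (else $0$) and $e$ on edges inside $S$ (else $0$). $\epsilon_{i,w,i',w'}=e_{i,w,i',w'}n/(a_{i,w}a_{i',w'})-1$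 if $a_{i,w},a_{i',w'}\ne0$, and $=1$ otherwise. $b(\epsilon)=(1+\epsilon)\log(1+\epsilon)-\epsilon$ for $\epsilon>-1$, $b(-1)=1$. *)

From Stdlib Require Import Reals Lra Lia List Arith Bool.
Import ListNotations.
Open Scope R_scope.

Fixpoint rsum (m : nat) (f : nat -> R) : R :=
  match m with
  | O => 0
  | S m' => rsum m' f + f m'
  end.

Definition d_regular (h d : nat) (adjH : nat -> nat -> bool) : Prop :=
  (forall i j, adjH i j = adjH j i) /\
  (forall i, adjH i i = false) /\
  (forall i j, adjH i j = true -> (i < h)%nat /\ (j < h)%nat) /\
  (forall i, (i < h)%nat -> length (filter (adjH i) (seq 0 h)) = d).

(* The weight with index k : nat is 2^k / sqrt(n h), an element of D^{>0}. *)
Definition weight (n h k : nat) : R := 2 ^ k / sqrt (INR n * INR h).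

Definition Rltb (x y : R) : bool := if Rlt_dec x y then true else false.

Definition gadj (n h d : nat) (adjH : nat -> nat -> bool) (i k i' k' : nat) : bool :=
  adjH i i' &&
  Rltb (/ sqrt (INR d)) (weight n h k / weight n h k') &&
  Rltb (weight n h k / weight n h k') (sqrt (INR d)).

(* a i k = a_{i,w_k}; e i k i' k' = e_{i,w_k,i',w_k'}.
   k0 indexes the weight w0 of the definition; B = k0 + d + 1 bounds the
   support in k (2^k <= d 2^k0 forces k < k0 + d). *)
Definition is_pattern (n h d : nat) (adjH : nat -> nat -> bool) (k0 : nat)
  (a : nat -> nat -> nat) (e : nat -> nat -> nat -> nat -> nat) : Prop :=
  (forall i k, (h <= i)%nat -> a i k = O) /\
  (forall i k, (i < h)%nat ->
     ~ (weight n h k0 <= weight n h k <= INR d * weight n h k0) -> a i k = O) /\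
  (forall i, (i < h)%nat -> (rsum (k0 + d + 1) (fun k => INR (a i k)) <= INR n)) /\
  (rsum h (fun i => rsum (k0 + d + 1)
     (fun k => (weight n h k) ^ 2 * INR (a i k))) <= 10) /\
  (forall i k i' k', gadj n h d adjH i k i' k' = true ->
     e i k i' k' = e i' k' i k /\ (e i k i' k' <= Nat.min (a i k) (a i' k'))%nat).

(* Potency: sum over (unordered) edges of Gamma = half the sum over ordered
   adjacent pairs; all terms vanish unless k,k' < B. *)
Definition potency (n h d : nat) (adjH : nat -> nat -> bool) (B : nat)
  (a : nat -> nat -> nat) (e : nat -> nat -> nat -> nat -> nat) : R :=
  Rabs (/ 2 * rsum h (fun i => rsum B (fun k => rsum h (fun i' => rsum B (fun k' =>
    if gadj n h d adjH i k i' k' then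
      weight n h k * weight n h k' *
      (INR (e i k i' k') - INR (a i k) * INR (a i' k') / INR n)
    else 0))))).

Definition sub_a (S : nat -> nat -> bool) (a : nat -> nat -> nat) : nat -> nat -> nat :=
  fun i k => if S i k then a i k else O.
Definition sub_e (S : nat -> nat -> bool) (e : nat -> nat -> nat -> nat -> nat)
  : nat -> nat -> nat -> nat -> nat :=
  fun i k i' k' => if S i k && S i' k' then e i k i' k' else O.

Definition eps (n : nat) (a : nat -> nat -> nat) (e : nat -> nat -> nat -> nat -> nat)
  (i k i' k' : nat) : R :=
  if negb (Nat.eqb (a i k) 0) && negb (Nat.eqb (a i' k') 0) then
    INR (e i k i' k') * INR n / (INR (a i k) * INR (a i' k')) - 1
  else 1.

Definition bfun (x : R) : R :=
  if Rlt_dec (-1) x then (1 + x) * ln (1 + x) - x else 1.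

From Stdlib Require Import Reals Lra Lia List Bool Classical.
Open Scope R_scope.

(* Starting from all vertices, repeatedly delete a vertex v of
   the current set that violates the required inequality.  Deleting v changes
   (twice) the potency sum by the sum of the edge terms at v, and for a
   violating v this is at most a cost f(v) depending on a alone.  To see this,
   put q = (a_v / n)^(1/4) and split the edges at v by the threshold
   1 + eps < exp(2) / q: large deviations are paid for directly by
   b(eps) >= (1 + eps) ln (1 + eps) / 2, small ones by Cauchy-Schwarz with
   b(eps) >= eps^2 / (4 max (1, 1 + eps)); in both cases the violation bounds
   the available sum of mu b(eps) by (L/10) a_v log(e n / a_v).  Summing f over
   all vertices gives at most 150 L sqrt d: along a row the weights are dyadic,
   so sum_k w_k q_k^3 <= 7 (sum_k w_k^2 a_k / n)^(1/2); then AM-GM,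
   d-regularity of H and sum w^2 a <= 10 finish the bound. *)

Lemma rsum_ext m f g : (forall j, (j < m)%nat -> f j = g j) -> rsum m f = rsum m g.
Proof.
induction m as [|m IH]; intros Hfg; simpl; [reflexivity|].
rewrite IH by (intros; apply Hfg; lia).
rewrite Hfg by lia; reflexivity.
Qed.

Lemma rsum_le m f g : (forall j, (j < m)%nat -> f j <= g j) -> rsum m f <= rsum m g.
Proof.
induction m as [|m IH]; intros Hfg; simpl; [lra|].
assert (f m <= g m) by (apply Hfg; lia).
assert (rsum m f <= rsum m g) by (apply IH; intros; apply Hfg; lia).
lra.
Qed.

Lemma rsum_plus m f g : rsum m (fun j => f j + g j) = rsum m f + rsum m g.
Proof. induction m as [|m IH]; simpl; [lra|]. rewrite IH; ring. Qed.

Lemma rsum_minus m f g : rsum m (fun j => f j - g j) = rsum m f - rsum m g.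
Proof. induction m as [|m IH]; simpl; [lra|]. rewrite IH; ring. Qed.

Lemma rsum_scal m c f : rsum m (fun j => c * f j) = c * rsum m f.
Proof. induction m as [|m IH]; simpl; [lra|]. rewrite IH; ring. Qed.

Lemma rsum_const m c : rsum m (fun _ => c) = INR m * c.
Proof. induction m as [|m IH]; simpl rsum; [simpl; lra|]. rewrite IH, S_INR; ring. Qed.

Lemma rsum_zero m f : (forall j, (j < m)%nat -> f j = 0) -> rsum m f = 0.
Proof.
intros Hf. rewrite (rsum_ext m f (fun _ => 0)) by exact Hf.
rewrite rsum_const; ring.
Qed.

Lemma rsum_nonneg m f : (forall j, (j < m)%nat -> 0 <= f j) -> 0 <= rsum m f.
Proof.
intros Hf. rewrite <- (rsum_zero m (fun _ => 0)) by reflexivity.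
apply rsum_le; exact Hf.
Qed.

Lemma Rabs_rsum_le m f : Rabs (rsum m f) <= rsum m (fun j => Rabs (f j)).
Proof.
induction m as [|m IH]; simpl; [rewrite Rabs_R0; lra|].
pose proof (Rabs_triang (rsum m f) (f m)); lra.
Qed.

Lemma rsum_term_le m f j0 :
  (forall j, (j < m)%nat -> 0 <= f j) -> (j0 < m)%nat -> f j0 <= rsum m f.
Proof.
induction m as [|m IH]; intros Hf Hj0; simpl; [lia|].
assert (0 <= f m) by (apply Hf; lia).
destruct (Nat.eq_dec j0 m) as [->|Hne].
- assert (0 <= rsum m f) by (apply rsum_nonneg; intros; apply Hf; lia); lra.
- assert (f j0 <= rsum m f) by (apply IH; [intros; apply Hf|]; lia); lra.
Qed.

Lemma rsum_delta m (g : nat -> R) j0 :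
  (j0 < m)%nat -> rsum m (fun j => if Nat.eqb j j0 then g j else 0) = g j0.
Proof.
induction m as [|m IH]; intros Hj0; simpl; [lia|].
destruct (Nat.eqb_spec m j0) as [<-|Hne].
- rewrite rsum_zero; [ring|].
  intros j Hj; destruct (Nat.eqb_spec j m); [lia|reflexivity].
- rewrite IH by lia; ring.
Qed.

Lemma rsum_cut m p f :
  (forall j, (m <= j)%nat -> f j = 0) -> (m <= p)%nat -> rsum p f = rsum m f.
Proof.
intros Hf Hmp. induction Hmp as [|p Hmp IH]; [reflexivity|].
simpl; rewrite IH, Hf by lia; ring.
Qed.

Lemma rsum_support m1 m2 f :
  (forall j, (m1 <= j)%nat -> f j = 0) -> (forall j, (m2 <= j)%nat -> f j = 0) ->
  rsum m1 f = rsum m2 f.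
Proof.
intros H1 H2. destruct (Nat.le_ge_cases m1 m2).
- symmetry; apply rsum_cut; assumption.
- apply rsum_cut; assumption.
Qed.

Lemma rsum_succ_l m f : rsum (S m) f = f O + rsum m (fun j => f (S j)).
Proof.
induction m as [|m IH]; [simpl; ring|].
change (rsum (S m) f + f (S m) = f O + (rsum m (fun j => f (S j)) + f (S m))).
rewrite IH; ring.
Qed.

Lemma rsum_comm m p (f : nat -> nat -> R) :
  rsum m (fun i => rsum p (fun j => f i j)) = rsum p (fun j => rsum m (fun i => f i j)).
Proof.
induction m as [|m IH]; simpl; [symmetry; apply rsum_zero; reflexivity|].
rewrite IH, <- rsum_plus; reflexivity.
Qed.

Lemma rsum_count m (p : nat -> bool) :
  rsum m (fun i => if p i then 1 else 0) = INR (length (filter p (seq 0 m))).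
Proof.
induction m as [|m IH]; [reflexivity|].
rewrite seq_S, filter_app, length_app, plus_INR; simpl rsum; rewrite IH.
simpl; destruct (p m); simpl; lra.
Qed.

Lemma rsum_cauchy_schwarz_sq m x y :
  (rsum m (fun j => x j * y j)) ^ 2
  <= rsum m (fun j => x j ^ 2) * rsum m (fun j => y j ^ 2).
Proof.
induction m as [|m IH]; cbn [rsum]; [simpl; lra|].
set (s := rsum m (fun j => x j * y j)) in *.
set (A := rsum m (fun j => x j ^ 2)) in *.
set (B := rsum m (fun j => y j ^ 2)) in *.
set (u := x m); set (v := y m).
assert (HA : 0 <= A) by (apply rsum_nonneg; intros; nra).
assert (HB : 0 <= B) by (apply rsum_nonneg; intros; nra).
(* AM-GM: 2 s u v <= 2 sqrt (A B) |u v| <= A v^2 + B u^2 *)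
assert (Hcross : 2 * s * (u * v) <= A * v ^ 2 + B * u ^ 2).
{ assert (s ^ 2 * (u ^ 2 * v ^ 2) <= A * B * (u ^ 2 * v ^ 2))
    by (apply Rmult_le_compat_r; [nra|exact IH]).
  assert (4 * (A * B * (u ^ 2 * v ^ 2)) <= (A * v ^ 2 + B * u ^ 2) ^ 2)
    by (pose proof (pow2_ge_0 (A * v ^ 2 - B * u ^ 2)); nra).
  assert (0 <= A * v ^ 2 + B * u ^ 2) by nra.
  assert ((2 * s * (u * v)) ^ 2 <= (A * v ^ 2 + B * u ^ 2) ^ 2) by nra.
  destruct (Rle_dec (2 * s * (u * v)) 0); [lra|nra]. }
replace ((s + u * v) ^ 2) with (s ^ 2 + 2 * s * (u * v) + u ^ 2 * v ^ 2) by ring.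
replace ((A + u ^ 2) * (B + v ^ 2)) with (A * B + (A * v ^ 2 + B * u ^ 2) + u ^ 2 * v ^ 2) by ring.
lra.
Qed.

Lemma rsum_cauchy_schwarz m x y :
  rsum m (fun j => x j * y j)
  <= sqrt (rsum m (fun j => x j ^ 2)) * sqrt (rsum m (fun j => y j ^ 2)).
Proof.
rewrite <- sqrt_mult_alt by (apply rsum_nonneg; intros; nra).
apply Rle_trans with (Rabs (rsum m (fun j => x j * y j))); [apply RRle_abs|].
rewrite <- sqrt_Rsqr_abs, Rsqr_pow2.
apply sqrt_le_1_alt, rsum_cauchy_schwarz_sq.
Qed.

Definition dsum h B (g : nat -> nat -> R) : R := rsum h (fun i => rsum B (fun k => g i k)).

Lemma dsum_ext h B f g :
  (forall i k, (i < h)%nat -> (k < B)%nat -> f i k = g i k) -> dsum h B f = dsum h B g.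
Proof. intros Hfg. apply rsum_ext; intros; apply rsum_ext; intros; apply Hfg; assumption. Qed.

Lemma dsum_le h B f g :
  (forall i k, (i < h)%nat -> (k < B)%nat -> f i k <= g i k) -> dsum h B f <= dsum h B g.
Proof. intros Hfg. apply rsum_le; intros; apply rsum_le; intros; apply Hfg; assumption. Qed.

Lemma dsum_nonneg h B f :
  (forall i k, (i < h)%nat -> (k < B)%nat -> 0 <= f i k) -> 0 <= dsum h B f.
Proof. intros Hf. apply rsum_nonneg; intros; apply rsum_nonneg; intros; apply Hf; assumption. Qed.

Lemma dsum_plus h B f g : dsum h B (fun i k => f i k + g i k) = dsum h B f + dsum h B g.
Proof. unfold dsum. rewrite <- rsum_plus. apply rsum_ext; intros; apply rsum_plus. Qed.

Lemma dsum_minus h B f g : dsum h B (fun i k => f i k - g i k) = dsum h B f - dsum h B g.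
Proof. unfold dsum. rewrite <- rsum_minus. apply rsum_ext; intros; apply rsum_minus. Qed.

Lemma dsum_scal h B c f : dsum h B (fun i k => c * f i k) = c * dsum h B f.
Proof. unfold dsum. rewrite <- rsum_scal. apply rsum_ext; intros; apply rsum_scal. Qed.

Lemma dsum_if h B (b : bool) f :
  dsum h B (fun i k => if b then f i k else 0) = if b then dsum h B f else 0.
Proof. destruct b; [reflexivity|]. apply rsum_zero; intros; apply rsum_zero; reflexivity. Qed.

Lemma Rabs_dsum_le h B f : Rabs (dsum h B f) <= dsum h B (fun i k => Rabs (f i k)).
Proof. eapply Rle_trans; [apply Rabs_rsum_le|]. apply rsum_le; intros; apply Rabs_rsum_le. Qed.

Lemma dsum_delta h B (g : nat -> nat -> R) i0 k0 :
  (i0 < h)%nat -> (k0 < B)%nat ->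
  dsum h B (fun i k => if Nat.eqb i i0 && Nat.eqb k k0 then g i k else 0) = g i0 k0.
Proof.
intros Hi Hk. unfold dsum.
rewrite (rsum_ext h _ (fun i => if Nat.eqb i i0 then g i k0 else 0)).
- apply (rsum_delta h (fun i => g i k0)); assumption.
- intros i _. destruct (Nat.eqb i i0); simpl.
  + apply (rsum_delta B (g i)); assumption.
  + apply rsum_zero; reflexivity.
Qed.

Lemma dsum_cauchy_schwarz h B x y :
  dsum h B (fun i k => x i k * y i k)
  <= sqrt (dsum h B (fun i k => x i k ^ 2)) * sqrt (dsum h B (fun i k => y i k ^ 2)).
Proof.
unfold dsum.
apply Rle_trans with
  (rsum h (fun i => sqrt (rsum B (fun k => x i k ^ 2)) * sqrt (rsum B (fun k => y i k ^ 2)))).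
{ apply rsum_le; intros; apply rsum_cauchy_schwarz. }
eapply Rle_trans; [apply rsum_cauchy_schwarz|].
right; f_equal; f_equal; apply rsum_ext; intros;
  rewrite pow2_sqrt by (apply rsum_nonneg; intros; apply pow2_ge_0); reflexivity.
Qed.

Lemma ln_le x y : 0 < x -> x <= y -> ln x <= ln y.
Proof. intros Hx [Hxy| ->]; [left; apply ln_increasing|]; lra. Qed.

Lemma ln_le_sub_1 x : 0 < x -> ln x <= x - 1.
Proof. intros Hx. pose proof (exp_ineq1_le (ln x)). rewrite exp_ln in *; lra. Qed.

Lemma ln_ge_1_sub_inv x : 0 < x -> 1 - / x <= ln x.
Proof.
intros Hx. pose proof (ln_le_sub_1 (/ x) (Rinv_0_lt_compat x Hx)).
rewrite ln_Rinv in *; lra.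
Qed.

Lemma sqrt_mult_le_avg x y : 0 <= x -> 0 <= y -> sqrt (x * y) <= (x + y) / 2.
Proof.
intros Hx Hy. rewrite sqrt_mult by assumption.
pose proof (sqrt_sqrt x Hx); pose proof (sqrt_sqrt y Hy).
pose proof (pow2_ge_0 (sqrt x - sqrt y)); nra.
Qed.

(* With r = sqrt (1 + x): b(x) = 2 r^2 ln r - r^2 + 1 >= 2 r^2 (1 - 1/r) - r^2 + 1 = (r - 1)^2. *)
Lemma bfun_ge_sqrt_sq x : -1 < x -> (sqrt (1 + x) - 1) ^ 2 <= bfun x.
Proof.
intros Hx. unfold bfun. destruct (Rlt_dec (-1) x) as [_|]; [|lra].
set (r := sqrt (1 + x)).
assert (Hr : 0 < r) by (apply sqrt_lt_R0; lra).
assert (Hrr : r * r = 1 + x) by (apply sqrt_sqrt; lra).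
assert (Hln : ln (1 + x) = 2 * ln r) by (rewrite <- Hrr, ln_mult; lra).
pose proof (ln_ge_1_sub_inv r Hr).
assert (r * r * (1 - / r) = r * r - r) by (field; lra).
rewrite Hln. nra.
Qed.

Lemma bfun_nonneg x : -1 <= x -> 0 <= bfun x.
Proof.
intros [Hx| <-].
- pose proof (bfun_ge_sqrt_sq x Hx); pose proof (pow2_ge_0 (sqrt (1 + x) - 1)); lra.
- unfold bfun; destruct (Rlt_dec (-1) (-1)); lra.
Qed.

Lemma sq_le_bfun x : -1 <= x -> x ^ 2 <= 4 * Rmax 1 (1 + x) * bfun x.
Proof.
intros [Hx| <-].
2:{ unfold bfun, Rmax. destruct (Rlt_dec (-1) (-1)); [lra|].
    destruct (Rle_dec 1 (1 + -1)); lra. }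
pose proof (bfun_ge_sqrt_sq x Hx) as Hb.
set (r := sqrt (1 + x)) in *.
assert (0 <= r) by apply sqrt_pos.
assert (Hrr : r * r = 1 + x) by (apply sqrt_sqrt; lra).
assert (Hx2 : x ^ 2 = (r - 1) ^ 2 * (r + 1) ^ 2) by (replace x with (r * r - 1) by lra; ring).
assert (Hmax : (r + 1) ^ 2 <= 4 * Rmax 1 (1 + x))
  by (unfold Rmax; destruct (Rle_dec 1 (1 + x)); nra).
rewrite Hx2.
pose proof (pow2_ge_0 (r - 1)); pose proof (pow2_ge_0 (r + 1)).
apply Rle_trans with (bfun x * (r + 1) ^ 2).
- apply Rmult_le_compat_r; lra.
- rewrite Rmult_comm. apply Rmult_le_compat_r; lra.
Qed.

Lemma xlnx_le_bfun x : -1 < x -> 2 <= ln (1 + x) -> (1 + x) * ln (1 + x) <= 2 * bfun x.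
Proof. intros Hx Hl. unfold bfun. destruct (Rlt_dec (-1) x); [nra|lra]. Qed.

Definition min_inv_sqrt (z : R) : R := Rmin z (/ sqrt z).

(* A potential for dyadic sums of [min_inv_sqrt]: [dyadic_bound_step] telescopes
   along x, 2x, 4x, ...; the constant 7 is what makes the regime x > 1 work,
   since 1 + 7 / (2 sqrt 2) <= 7 / 2. *)
Definition dyadic_bound (x : R) : R := if Rle_dec x 1 then 7 - 2 * x else 7 / 2 / sqrt x.

Lemma inv_sqrt_lt_1 x : 1 < x -> 0 < / sqrt x < 1.
Proof.
intros Hx. assert (1 < sqrt x) by (rewrite <- sqrt_1; apply sqrt_lt_1; lra).
split; [apply Rinv_0_lt_compat; lra|].
rewrite <- Rinv_1. apply Rinv_lt_contravar; lra.
Qed.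

Lemma dyadic_bound_step x : 0 < x -> min_inv_sqrt x + dyadic_bound (2 * x) <= dyadic_bound x.
Proof.
intros Hx. unfold dyadic_bound, min_inv_sqrt.
pose proof (Rmin_l x (/ sqrt x)); pose proof (Rmin_r x (/ sqrt x)).
destruct (Rle_dec x 1); destruct (Rle_dec (2 * x) 1); [lra| |lra|].
- pose proof (inv_sqrt_lt_1 (2 * x) ltac:(lra)). unfold Rdiv at 1; nra.
- assert (Hsx : 0 < sqrt x) by (apply sqrt_lt_R0; lra).
  assert (Hs2 : 1.4 <= sqrt 2)
    by (rewrite <- (sqrt_square 1.4) by lra; apply sqrt_le_1; lra).
  rewrite sqrt_mult by lra.
  replace (7 / 2 / (sqrt 2 * sqrt x)) with (7 / (2 * sqrt 2) * / sqrt x) by (field; lra).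
  replace (7 / 2 / sqrt x) with (7 / 2 * / sqrt x) by (field; lra).
  assert (7 / (2 * sqrt 2) <= 5 / 2)
    by (apply Rmult_le_reg_r with (2 * sqrt 2); [lra|]; field_simplify; lra).
  assert (0 < / sqrt x) by (apply Rinv_0_lt_compat; lra).
  nra.
Qed.

Lemma dyadic_bound_le_7 x : 0 < x -> 0 <= dyadic_bound x <= 7.
Proof.
intros Hx. unfold dyadic_bound. destruct (Rle_dec x 1); [lra|].
pose proof (inv_sqrt_lt_1 x ltac:(lra)). unfold Rdiv; nra.
Qed.

Lemma rsum_min_inv_sqrt_le B x :
  0 < x -> rsum B (fun k => min_inv_sqrt (2 ^ k * x)) <= dyadic_bound x.
Proof.
revert x. induction B as [|B IH]; intros x Hx.
- apply dyadic_bound_le_7; assumption.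
- rewrite rsum_succ_l, Rmult_1_l.
  rewrite (rsum_ext B _ (fun j => min_inv_sqrt (2 ^ j * (2 * x))))
    by (intros; simpl pow; f_equal; ring).
  pose proof (IH (2 * x) ltac:(lra)); pose proof (dyadic_bound_step x Hx); lra.
Qed.

Definition root4 (t : R) : R := sqrt (sqrt t).

Lemma root4_pow4 t : 0 <= t -> root4 t ^ 4 = t.
Proof.
intros Ht. unfold root4.
assert (sqrt (sqrt t) * sqrt (sqrt t) = sqrt t) by (apply sqrt_sqrt, sqrt_pos).
assert (sqrt t * sqrt t = t) by (apply sqrt_sqrt; assumption).
simpl; nra.
Qed.

Lemma root4_bounds t : 0 <= t <= 1 -> 0 <= root4 t <= 1.
Proof.
intros Ht. unfold root4. split; [apply sqrt_pos|].
rewrite <- sqrt_1. apply sqrt_le_1_alt. rewrite <- sqrt_1. apply sqrt_le_1_alt. lra.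
Qed.

Lemma mul_cube_le_min_inv_sqrt w q W :
  0 < w -> 0 <= q <= 1 -> 0 < W -> w ^ 2 * q ^ 4 <= W ^ 2 ->
  w * q ^ 3 <= W * min_inv_sqrt (w / W).
Proof.
intros Hw Hq HW Hwq4. unfold min_inv_sqrt.
assert (HwW : 0 < w / W) by (apply Rdiv_lt_0_compat; assumption).
assert (Hq3 : q ^ 3 <= 1) by (rewrite <- (pow1 3); apply pow_incr; lra).
assert (Hlin : w * q ^ 3 <= W * (w / W))
  by (replace (W * (w / W)) with w by (field; lra); nra).
assert (Hwq : w * q ^ 2 <= W) by nra.
assert (Hsqrt : w * q ^ 3 <= W * / sqrt (w / W)).
{ assert (Hs : 0 < sqrt (w / W)) by (apply sqrt_lt_R0; assumption).
  apply Rsqr_incr_0_var; [|assert (0 < / sqrt (w / W)) by (apply Rinv_0_lt_compat; lra); nra].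
  unfold Rsqr.
  replace (W * / sqrt (w / W) * (W * / sqrt (w / W)))
    with (W * W / (sqrt (w / W) * sqrt (w / W))) by (field; lra).
  rewrite sqrt_sqrt by lra.
  replace (W * W / (w / W)) with (W ^ 3 / w) by (field; lra).
  replace (w * q ^ 3 * (w * q ^ 3)) with ((w * q ^ 2) ^ 3 / w) by (field; lra).
  apply Rmult_le_compat_r; [left; apply Rinv_0_lt_compat; lra|].
  apply pow_incr; split; nra. }
unfold Rmin. destruct (Rle_dec (w / W) (/ sqrt (w / W))); assumption.
Qed.

Lemma dyadic_cube_sum_le B sg (t : nat -> R) :
  0 < sg -> (forall k, (k < B)%nat -> 0 <= t k <= 1) ->
  rsum B (fun k => 2 ^ k / sg * root4 (t k) ^ 3)
  <= 7 * sqrt (rsum B (fun k => (2 ^ k / sg) ^ 2 * t k)).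
Proof.
intros Hsg Ht.
set (Q := rsum B (fun k => (2 ^ k / sg) ^ 2 * t k)).
assert (Hw : forall k, 0 < 2 ^ k / sg) by (intros; apply Rdiv_lt_0_compat; [apply pow_lt|]; lra).
assert (Hterm : forall k, (k < B)%nat -> 0 <= (2 ^ k / sg) ^ 2 * t k)
  by (intros k Hk; specialize (Ht k Hk); apply Rmult_le_pos; [apply pow2_ge_0|lra]).
assert (Hle : forall k, (k < B)%nat -> (2 ^ k / sg) ^ 2 * t k <= Q)
  by (intros; apply (rsum_term_le B (fun k => (2 ^ k / sg) ^ 2 * t k)); assumption).
destruct (Rle_lt_or_eq_dec 0 Q) as [HQ|HQ]; [apply rsum_nonneg; assumption| |].
- set (W := sqrt Q).
  assert (HW : 0 < W) by (apply sqrt_lt_R0; assumption).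
  assert (HWW : W ^ 2 = Q) by (apply pow2_sqrt; lra).
  apply Rle_trans with (rsum B (fun k => W * min_inv_sqrt (2 ^ k * / (sg * W)))).
  + apply rsum_le. intros k Hk.
    replace (2 ^ k * / (sg * W)) with (2 ^ k / sg / W) by (field; lra).
    apply mul_cube_le_min_inv_sqrt; auto; [apply root4_bounds; auto|].
    rewrite root4_pow4, HWW by (apply Ht; assumption). apply Hle; assumption.
  + rewrite rsum_scal, Rmult_comm. apply Rmult_le_compat_r; [lra|].
    pose proof (rsum_min_inv_sqrt_le B (/ (sg * W)) ltac:(apply Rinv_0_lt_compat; nra)).
    pose proof (dyadic_bound_le_7 (/ (sg * W)) ltac:(apply Rinv_0_lt_compat; nra)).
    lra.
- rewrite rsum_zero; [rewrite <- HQ, sqrt_0; lra|].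
  intros k Hk.
  assert (Htk : t k = 0).
  { specialize (Hle k Hk); specialize (Hterm k Hk); specialize (Hw k).
    assert (0 < (2 ^ k / sg) ^ 2) by (apply pow_lt; assumption). nra. }
  unfold root4. rewrite Htk, sqrt_0, sqrt_0. ring.
Qed.

Lemma Rltb_true x y : Rltb x y = true <-> x < y.
Proof. unfold Rltb. destruct (Rlt_dec x y); split; intros; easy. Qed.

Lemma Rltb_inv_swap r s : 0 < r -> 0 < s -> Rltb (/ s) r = Rltb (/ r) s.
Proof.
intros Hr Hs. apply eq_true_iff_eq. rewrite !Rltb_true.
split; intros Hlt.
- rewrite <- (Rinv_inv s). apply Rinv_lt_contravar; [|exact Hlt].
  apply Rmult_lt_0_compat; [apply Rinv_0_lt_compat|]; assumption.
- rewrite <- (Rinv_inv r). apply Rinv_lt_contravar; [|exact Hlt].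
  apply Rmult_lt_0_compat; [apply Rinv_0_lt_compat|]; assumption.
Qed.

Lemma INR_le_pow2 m : INR m <= 2 ^ m.
Proof.
induction m as [|m IH]; [simpl; lra|].
rewrite S_INR; simpl. pose proof (pow_R1_Rle 2 m ltac:(lra)); lra.
Qed.

Lemma sqrt_INR_pos d : (1 <= d)%nat -> 0 < sqrt (INR d).
Proof. intros Hd. apply sqrt_lt_R0, lt_0_INR; lia. Qed.

Lemma sqrt_nh_pos n h : (1 <= n)%nat -> (1 <= h)%nat -> 0 < sqrt (INR n * INR h).
Proof. intros Hn Hh. apply sqrt_lt_R0, Rmult_lt_0_compat; apply lt_0_INR; lia. Qed.

Lemma weight_nonneg n h k : 0 <= weight n h k.
Proof.
unfold weight. apply Rmult_le_pos; [left; apply pow_lt; lra|].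
destruct (Req_dec (sqrt (INR n * INR h)) 0) as [->|Hne]; [rewrite Rinv_0; lra|].
left; apply Rinv_0_lt_compat. pose proof (sqrt_pos (INR n * INR h)); lra.
Qed.

Lemma weight_pos n h k : (1 <= n)%nat -> (1 <= h)%nat -> 0 < weight n h k.
Proof. intros Hn Hh. apply Rdiv_lt_0_compat; [apply pow_lt; lra|apply sqrt_nh_pos; assumption]. Qed.

Section Gamma.
Variables (n h d : nat) (adjH : nat -> nat -> bool).
Hypotheses (Hn : (1 <= n)%nat) (Hh : (1 <= h)%nat) (Hd : (2 <= d)%nat).

Lemma gadj_weight_lt i k i' k' :
  gadj n h d adjH i k i' k' = true -> weight n h k' < sqrt (INR d) * weight n h k.
Proof.
unfold gadj. intros G. apply andb_prop in G as [G _]. apply andb_prop in G as [_ G].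
apply Rltb_true in G.
pose proof (weight_pos n h k Hn Hh); pose proof (weight_pos n h k' Hn Hh).
pose proof (sqrt_INR_pos d ltac:(lia)).
assert (Hlt : / sqrt (INR d) * weight n h k' < weight n h k / weight n h k' * weight n h k')
  by (apply Rmult_lt_compat_r; assumption).
replace (weight n h k / weight n h k' * weight n h k') with (weight n h k) in Hlt by (field; lra).
apply Rmult_lt_compat_l with (r := sqrt (INR d)) in Hlt; [|assumption].
rewrite <- Rmult_assoc, Rinv_r, Rmult_1_l in Hlt; lra.
Qed.

Lemma gadj_index_lt i k i' k' : gadj n h d adjH i k i' k' = true -> (k' < k + d + 1)%nat.
Proof.
intros G. pose proof (gadj_weight_lt i k i' k' G) as Hw.
destruct (Nat.lt_ge_cases k' (k + d + 1)) as [|Hk']; [assumption|exfalso].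
unfold weight in Hw.
pose proof (sqrt_nh_pos n h Hn Hh) as Hsg.
assert (Hp : 2 ^ k' < sqrt (INR d) * 2 ^ k).
{ apply Rmult_lt_reg_r with (/ sqrt (INR n * INR h)); [apply Rinv_0_lt_compat; lra|].
  unfold Rdiv in Hw; lra. }
assert (Hsd : sqrt (INR d) <= 2 ^ d).
{ apply Rle_trans with (INR d); [|apply INR_le_pow2].
  rewrite <- (sqrt_square (INR d)) at 2 by apply pos_INR.
  apply sqrt_le_1_alt. assert (2 <= INR d) by (apply (le_INR 2); lia). nra. }
assert (2 ^ (k + d + 1) <= 2 ^ k') by (apply Rle_pow; [lra|lia]).
rewrite !pow_add in *.
pose proof (pow_lt 2 k ltac:(lra)); pose proof (pow_lt 2 d ltac:(lra)).
nra.
Qed.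

Lemma gadj_irrefl i k : d_regular h d adjH -> gadj n h d adjH i k i k = false.
Proof. intros [_ [Hirr _]]. unfold gadj. rewrite Hirr. reflexivity. Qed.

Lemma gadj_sym i k i' k' :
  d_regular h d adjH -> gadj n h d adjH i k i' k' = gadj n h d adjH i' k' i k.
Proof.
intros [Hsym _]. unfold gadj. rewrite Hsym.
pose proof (weight_pos n h k Hn Hh); pose proof (weight_pos n h k' Hn Hh).
pose proof (sqrt_INR_pos d ltac:(lia)).
replace (weight n h k' / weight n h k) with (/ (weight n h k / weight n h k')) by (field; lra).
assert (0 < weight n h k / weight n h k') by (apply Rdiv_lt_0_compat; assumption).
rewrite (Rltb_inv_swap (weight n h k / weight n h k')) by assumption.
rewrite (Rltb_inv_swap (/ _)), Rinv_inv by (try apply Rinv_0_lt_compat; assumption).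
destruct (adjH i' i); [apply andb_comm|reflexivity].
Qed.

End Gamma.

Lemma edge_term_split w w' sd mu E l Tp ep :
  0 < w -> 0 < w' -> w' < sd * w -> 0 < mu -> E = mu * (1 + ep) -> -1 <= ep ->
  1 <= l -> 1 <= Tp -> 2 <= ln Tp -> l / 4 <= ln Tp ->
  Rabs (w * w' * (E - mu))
  <= 8 * sd * w ^ 2 / l * (mu * bfun ep)
     + (if Rltb (1 + ep) Tp then w * w' * mu * Rabs ep else 0).
Proof.
intros Hw Hw' Hr Hmu -> Hep Hl HTp HlnT2 HlnTl.
pose proof (bfun_nonneg ep Hep) as Hb.
assert (Hsd : 0 < sd) by nra.
assert (Hfirst : 0 <= 8 * sd * w ^ 2 / l * (mu * bfun ep)).
{ apply Rmult_le_pos; [|nra]. apply Rle_mult_inv_pos; [|lra].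
  pose proof (pow2_ge_0 w); nra. }
replace (w * w' * (mu * (1 + ep) - mu)) with (w * w' * mu * ep) by ring.
assert (Hwwm : 0 < w * w' * mu) by (repeat apply Rmult_lt_0_compat; assumption).
rewrite Rabs_mult, (Rabs_right (w * w' * mu)) by lra.
destruct (Rltb (1 + ep) Tp) eqn:Hsmall; [lra|].
(* a large deviation: 1 + ep >= Tp, so (1 + ep) l <= 4 (1 + ep) ln (1 + ep) <= 8 b(ep) *)
assert (Hge : Tp <= 1 + ep)
  by (destruct (Rlt_dec (1 + ep) Tp) as [Hlt|]; [apply Rltb_true in Hlt; congruence|lra]).
assert (ln Tp <= ln (1 + ep)) by (apply ln_le; lra).
pose proof (xlnx_le_bfun ep ltac:(lra) ltac:(lra)).
assert (Hbig : (1 + ep) * l <= 8 * bfun ep) by nra.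
rewrite Rplus_0_r, Rabs_right by lra.
apply Rle_trans with (w * (sd * w) * (mu * (1 + ep))).
{ replace (w * w' * mu * ep) with (w * w' * (mu * ep)) by ring.
  apply Rmult_le_compat; [nra|nra|apply Rmult_le_compat_l; lra|nra]. }
replace (8 * sd * w ^ 2 / l * (mu * bfun ep)) with (w * (sd * w) * (mu * (8 * bfun ep / l)))
  by (field; lra).
apply Rmult_le_compat_l; [nra|]. apply Rmult_le_compat_l; [lra|].
apply Rmult_le_reg_r with l; [lra|]. unfold Rdiv. rewrite Rmult_assoc, Rinv_l; lra.
Qed.

Lemma eps_ge_m1 n (a : nat -> nat -> nat) e i k i' k' : -1 <= eps n a e i k i' k'.
Proof.
unfold eps. destruct (negb (a i k =? 0)%nat && negb (a i' k' =? 0)%nat); [|lra].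
assert (0 <= INR (e i k i' k') * INR n / (INR (a i k) * INR (a i' k'))).
{ apply Rmult_le_pos; [apply Rmult_le_pos; apply pos_INR|].
  destruct (Req_dec (INR (a i k) * INR (a i' k')) 0) as [->|Hne]; [rewrite Rinv_0; lra|].
  left; apply Rinv_0_lt_compat. pose proof (pos_INR (a i k)); pose proof (pos_INR (a i' k')); nra. }
lra.
Qed.

Definition edge_term n h d adjH (a : nat -> nat -> nat) (e : nat -> nat -> nat -> nat -> nat)
    i k i' k' : R :=
  if gadj n h d adjH i k i' k'
  then weight n h k * weight n h k' * (INR (e i k i' k') - INR (a i k) * INR (a i' k') / INR n)
  else 0.

Definition row_mass n h B (a : nat -> nat -> nat) i : R :=
  rsum B (fun k => weight n h k ^ 2 * INR (a i k)).

Definition nbr_mass n h B (adjH : nat -> nat -> bool) a i : R :=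
  rsum h (fun i' => if adjH i i' then row_mass n h B a i' else 0).

(* The cost charged to a vertex when the pruning deletes it: the first summand
   pays for the large deviations at its edges, the second for the small ones. *)
Definition vertex_cost n h d B adjH L (a : nat -> nat -> nat) i k : R :=
  8 * (L / 10) * sqrt (INR d) * weight n h k ^ 2 * INR (a i k)
  + weight n h k * (4 * exp 1 * sqrt (L / 10) * root4 (INR (a i k) / INR n) ^ 3
                    * sqrt (INR n * nbr_mass n h B adjH a i)).

Definition good_vertex n h d adjH L a e (S : nat -> nat -> bool) i k : Prop :=
  rsum h (fun i' => rsum (k + d + 1) (fun k' =>
    if gadj n h d adjH i k i' k' && S i' k'
    then INR (a i k) * INR (a i' k') / INR n * bfun (eps n a e i k i' k')
    else 0))
  >= (if Nat.eqb (a i k) 0 then 0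
      else L / 10 * INR (a i k) * ln (exp 1 * INR n / INR (a i k))).

Lemma row_mass_nonneg n h B a i : 0 <= row_mass n h B a i.
Proof. apply rsum_nonneg; intros; apply Rmult_le_pos; [apply pow2_ge_0|apply pos_INR]. Qed.

Lemma nbr_mass_nonneg n h B adjH a i : 0 <= nbr_mass n h B adjH a i.
Proof. apply rsum_nonneg; intros j _. destruct (adjH i j); [apply row_mass_nonneg|lra]. Qed.

Lemma good_vertex_empty n h d adjH L a e S i k : a i k = 0%nat -> good_vertex n h d adjH L a e S i k.
Proof.
intros Ha. unfold good_vertex. rewrite Ha. apply Rle_ge, Req_le. symmetry.
apply rsum_zero; intros; apply rsum_zero; intros.
destruct (_ && _); [simpl; unfold Rdiv; ring|reflexivity].
Qed.

Section BadVertex.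
Variables (n h d : nat) (adjH : nat -> nat -> bool) (L : R) (B : nat)
  (a : nat -> nat -> nat) (e : nat -> nat -> nat -> nat -> nat)
  (T : nat -> nat -> bool) (i k : nat).
Hypotheses (Hn : (1 <= n)%nat) (Hd : (2 <= d)%nat) (HL : 0 < L)
  (HT : forall i k, T i k = true -> (i < h)%nat /\ (k < B)%nat)
  (He : forall i' k', gadj n h d adjH i k i' k' = true ->
          (e i k i' k' <= Nat.min (a i k) (a i' k'))%nat)
  (Hi : (i < h)%nat) (HaN : INR (a i k) <= INR n) (Ha : a i k <> 0%nat)
  (Hbad : ~ good_vertex n h d adjH L a e T i k).

Let A := INR (a i k).
Let N := INR n.
Let q := root4 (A / N).
Let l := ln (exp 1 * N / A).
(* the threshold separating small from large deviations 1 + eps *)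
Let Tp := exp 1 ^ 2 / q.
Let w := weight n h k.
Let sd := sqrt (INR d).
Let nbr i' k' := gadj n h d adjH i k i' k' && T i' k'.
Let mu i' k' := A * INR (a i' k') / N.
Let ep i' k' := eps n a e i k i' k'.
Let bterm i' k' := if nbr i' k' then mu i' k' * bfun (ep i' k') else 0.
(* Cauchy-Schwarz factors of a small deviation: w w' mu |eps| = w * xs * ys. *)
Let xs i' k' := if nbr i' k' then weight n h k' * sqrt (mu i' k') else 0.
Let ys i' k' :=
  if nbr i' k' && negb (a i' k' =? 0)%nat && Rltb (1 + ep i' k') Tp
  then sqrt (mu i' k') * Rabs (ep i' k') else 0.

Let Hh : (1 <= h)%nat. Proof. lia. Qed.
Let HA : 1 <= A. Proof. apply (le_INR 1); lia. Qed.
Let HN : 1 <= N. Proof. apply (le_INR 1); lia. Qed.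
Let Hw : 0 < w. Proof. apply weight_pos; assumption. Qed.
Let Hsd : 0 < sd. Proof. apply sqrt_INR_pos; lia. Qed.

Let q_facts : 0 < q <= 1 /\ q ^ 4 = A / N.
Proof.
assert (HAN : A <= N) by exact HaN.
assert (Hr : 0 < A / N <= 1).
{ split; [apply Rdiv_lt_0_compat; lra|].
  apply Rmult_le_reg_r with N; [lra|]. unfold Rdiv; rewrite Rmult_assoc, Rinv_l; lra. }
split; [split|].
- apply sqrt_lt_R0, sqrt_lt_R0; lra.
- apply root4_bounds; lra.
- apply root4_pow4; lra.
Qed.

Let l_eq : l = 1 - 4 * ln q.
Proof.
destruct q_facts as [[Hq _] Hq4].
unfold l. replace (exp 1 * N / A) with (exp 1 * / q ^ 4) by (rewrite Hq4; field; lra).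
rewrite ln_mult, ln_exp, ln_Rinv, ln_pow by (try apply Rinv_0_lt_compat; try apply pow_lt;
  try apply exp_pos; assumption).
simpl INR; ring.
Qed.

Let l_bounds : 1 <= l <= 4 / q.
Proof.
destruct q_facts as [[Hq Hq1] _].
pose proof (ln_le_sub_1 q Hq); pose proof (ln_ge_1_sub_inv q Hq).
rewrite l_eq. unfold Rdiv. split; [lra|].
assert (1 <= / q) by (rewrite <- Rinv_1; apply Rinv_le_contravar; lra). lra.
Qed.

Let Tp_facts : 1 <= Tp /\ ln Tp = 2 - ln q.
Proof.
destruct q_facts as [[Hq Hq1] _].
pose proof (exp_ineq1_le 1).
split.
- unfold Tp. apply Rmult_le_reg_r with q; [assumption|].
  unfold Rdiv. rewrite Rmult_assoc, Rinv_l; nra.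
- unfold Tp, Rdiv. rewrite ln_mult, ln_pow, ln_exp, ln_Rinv
    by (try apply Rinv_0_lt_compat; try apply pow_lt; try apply exp_pos; assumption).
  simpl INR; ring.
Qed.

Let mu_nonneg i' k' : 0 <= mu i' k'.
Proof. apply Rle_mult_inv_pos; [|lra]. pose proof (pos_INR (a i' k')); nra. Qed.

Let bterm_nonneg i' k' : 0 <= bterm i' k'.
Proof.
unfold bterm. destruct (nbr i' k'); [|lra].
apply Rmult_le_pos; [apply mu_nonneg|apply bfun_nonneg, eps_ge_m1].
Qed.

Let bterm_sum_lt : dsum h B bterm < L / 10 * A * l.
Proof.
unfold good_vertex in Hbad. rewrite (proj2 (Nat.eqb_neq _ _) Ha) in Hbad.
apply Rnot_ge_lt in Hbad. eapply Rle_lt_trans; [|exact Hbad].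
right. apply rsum_ext. intros i' Hi'. apply rsum_support.
- intros j Hj. unfold bterm, nbr. destruct (T i' j) eqn:ET.
  + destruct (HT _ _ ET); lia.
  + rewrite andb_false_r; reflexivity.
- intros j Hj. destruct (gadj n h d adjH i k i' j) eqn:G; [|reflexivity].
  pose proof (gadj_index_lt n h d adjH Hn Hh Hd _ _ _ _ G); lia.
Qed.

Let edge_term_le i' k' :
  Rabs (if T i' k' then edge_term n h d adjH a e i k i' k' else 0)
  <= 8 * sd * w ^ 2 / l * bterm i' k' + w * (xs i' k' * ys i' k').
Proof.
pose proof (bterm_nonneg i' k') as Hb. pose proof l_bounds.
assert (Hcoef : 0 <= 8 * sd * w ^ 2 / l)
  by (apply Rle_mult_inv_pos; [pose proof (pow2_ge_0 w); nra|lra]).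
unfold bterm, xs, ys, nbr, edge_term in *.
destruct (T i' k'), (gadj n h d adjH i k i' k') eqn:G; cbn [andb negb] in Hb |- *;
  try (rewrite Rabs_R0; nra).
destruct (Nat.eqb_spec (a i' k') 0) as [Ha'|Ha']; cbn [andb negb].
- specialize (He i' k' G). rewrite Ha', Nat.min_0_r in He.
  replace (e i k i' k') with 0%nat by lia. rewrite Ha'.
  replace (weight n h k * weight n h k' * (INR 0 - INR (a i k) * INR 0 / INR n)) with 0
    by (simpl; unfold Rdiv; ring).
  rewrite Rabs_R0. nra.
- assert (HA' : 1 <= INR (a i' k')) by (apply (le_INR 1); lia).
  assert (Hmu : 0 < mu i' k') by (apply Rdiv_lt_0_compat; nra).
  destruct Tp_facts as [HTp HlnT]. destruct q_facts as [[Hq Hq1] _].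
  pose proof (ln_le_sub_1 q Hq).
  replace (w * (weight n h k' * sqrt (mu i' k') *
     (if Rltb (1 + ep i' k') Tp then sqrt (mu i' k') * Rabs (ep i' k') else 0)))
    with (if Rltb (1 + ep i' k') Tp then w * weight n h k' * mu i' k' * Rabs (ep i' k') else 0)
    by (destruct (Rltb _ _); [rewrite <- (sqrt_sqrt (mu i' k')) at 1 by lra; ring|ring]).
  apply edge_term_split; try lra.
  + apply weight_pos; assumption.
  + apply (gadj_weight_lt n h d adjH Hn Hh Hd i k i' k' G).
  + unfold ep, eps, mu, A, N in HA, HN |- *.
    rewrite (proj2 (Nat.eqb_neq _ _) Ha), (proj2 (Nat.eqb_neq _ _) Ha'). simpl.
    field. split; lra.
  + apply eps_ge_m1.
Qed.

Let xs_sq_sum_le : dsum h B (fun i' k' => xs i' k' ^ 2) <= A / N * nbr_mass n h B adjH a i.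
Proof.
unfold nbr_mass, dsum. rewrite <- rsum_scal. apply rsum_le. intros i' Hi'.
destruct (adjH i i') eqn:Hadj.
- unfold row_mass. rewrite <- rsum_scal. apply rsum_le. intros k' Hk'.
  assert (0 <= A / N) by (apply Rle_mult_inv_pos; lra).
  pose proof (pos_INR (a i' k')); pose proof (pow2_ge_0 (weight n h k')).
  unfold xs. destruct (nbr i' k').
  + rewrite Rpow_mult_distr, pow2_sqrt by apply mu_nonneg.
    unfold mu. right; field; lra.
  + simpl; rewrite Rmult_0_l. apply Rmult_le_pos; nra.
- rewrite Rmult_0_r. right. apply rsum_zero. intros k' _.
  unfold xs, nbr, gadj. rewrite Hadj. simpl; ring.
Qed.

Let ys_sq_sum_le : dsum h B (fun i' k' => ys i' k' ^ 2) <= 4 * Tp * dsum h B bterm.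
Proof.
rewrite <- dsum_scal. apply dsum_le. intros i' k' _ _.
pose proof (bterm_nonneg i' k') as Hb. destruct Tp_facts as [HTp _].
unfold ys, bterm in Hb |- *.
destruct (nbr i' k'); cbn [andb]; [|simpl; lra].
destruct (negb (a i' k' =? 0)%nat && Rltb (1 + ep i' k') Tp) eqn:Hsmall; [|simpl; nra].
apply andb_prop in Hsmall as [_ Hsmall]. apply Rltb_true in Hsmall.
pose proof (eps_ge_m1 n a e i k i' k') as Hep. fold (ep i' k') in Hep.
rewrite Rpow_mult_distr, pow2_sqrt, pow2_abs by apply mu_nonneg.
pose proof (sq_le_bfun _ Hep). pose proof (bfun_nonneg _ Hep).
assert (Rmax 1 (1 + ep i' k') <= Tp) by (apply Rmax_lub; lra).
pose proof (mu_nonneg i' k').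
apply Rle_trans with (mu i' k' * (4 * Rmax 1 (1 + ep i' k') * bfun (ep i' k')));
  [apply Rmult_le_compat_l; assumption|].
replace (4 * Tp * (mu i' k' * bfun (ep i' k'))) with (mu i' k' * (4 * Tp * bfun (ep i' k')))
  by ring.
apply Rmult_le_compat_l; [assumption|]. apply Rmult_le_compat_r; lra.
Qed.

Let xs_ys_sum_le :
  dsum h B (fun i' k' => xs i' k' * ys i' k')
  <= 4 * exp 1 * sqrt (L / 10) * q ^ 3 * sqrt (N * nbr_mass n h B adjH a i).
Proof.
eapply Rle_trans; [apply dsum_cauchy_schwarz|].
set (X := dsum h B (fun i' k' => xs i' k' ^ 2)).
set (Y := dsum h B (fun i' k' => ys i' k' ^ 2)).
set (Z := nbr_mass n h B adjH a i).
assert (HX : 0 <= X) by (apply dsum_nonneg; intros; apply pow2_ge_0).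
assert (HY : 0 <= Y) by (apply dsum_nonneg; intros; apply pow2_ge_0).
assert (HZ : 0 <= Z) by apply nbr_mass_nonneg.
destruct q_facts as [[Hq Hq1] Hq4]. pose proof l_bounds. pose proof (exp_pos 1) as Hexp.
assert (HAq : A = N * q ^ 4) by (rewrite Hq4; field; lra).
assert (HYb : Y <= 4 * Tp * (L / 10 * A * l)).
{ apply Rle_trans with (4 * Tp * dsum h B bterm); [apply ys_sq_sum_le|].
  apply Rmult_le_compat_l; [pose proof Tp_facts; lra|left; apply bterm_sum_lt]. }
(* X Y <= (A/N) Z * 4 (e^2/q) (L/10) A l, and A = N q^4, l <= 4/q *)
assert (Hprod : X * Y <= 16 * exp 1 ^ 2 * (L / 10) * q ^ 6 * (N * Z)).
{ apply Rle_trans with ((A / N * Z) * (4 * Tp * (L / 10 * A * l))).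
  { apply Rmult_le_compat; [assumption|assumption|apply xs_sq_sum_le|exact HYb]. }
  replace ((A / N * Z) * (4 * Tp * (L / 10 * A * l)))
    with (4 * exp 1 ^ 2 * (L / 10) * Z * N * q ^ 7 * l) by (unfold Tp; rewrite HAq; field; lra).
  replace (16 * exp 1 ^ 2 * (L / 10) * q ^ 6 * (N * Z))
    with (4 * exp 1 ^ 2 * (L / 10) * Z * N * q ^ 7 * (4 / q)) by (field; lra).
  apply Rmult_le_compat_l; [|lra].
  pose proof (pow_lt q 7 Hq); pose proof (pow_lt (exp 1) 2 Hexp).
  repeat apply Rmult_le_pos; lra. }
rewrite <- sqrt_mult_alt by assumption.
assert (Hr : 0 <= 4 * exp 1 * sqrt (L / 10) * q ^ 3 * sqrt (N * Z)).
{ pose proof (pow_lt q 3 Hq); pose proof (sqrt_pos (L / 10)); pose proof (sqrt_pos (N * Z)).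
  repeat apply Rmult_le_pos; lra. }
rewrite <- (sqrt_square _ Hr). apply sqrt_le_1_alt.
replace (4 * exp 1 * sqrt (L / 10) * q ^ 3 * sqrt (N * Z) * (4 * exp 1 * sqrt (L / 10) * q ^ 3 * sqrt (N * Z)))
  with (16 * exp 1 ^ 2 * (sqrt (L / 10) * sqrt (L / 10)) * q ^ 6 * (sqrt (N * Z) * sqrt (N * Z)))
  by ring.
rewrite !sqrt_sqrt by (try apply Rmult_le_pos; lra).
exact Hprod.
Qed.

Lemma bad_vertex_edge_sum_le :
  dsum h B (fun i' k' => Rabs (if T i' k' then edge_term n h d adjH a e i k i' k' else 0))
  <= vertex_cost n h d B adjH L a i k.
Proof.
apply Rle_trans with
  (dsum h B (fun i' k' => 8 * sd * w ^ 2 / l * bterm i' k' + w * (xs i' k' * ys i' k'))).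
{ apply dsum_le; intros; apply edge_term_le. }
rewrite dsum_plus, !dsum_scal.
pose proof l_bounds; pose proof bterm_sum_lt; pose proof xs_ys_sum_le.
assert (Hfirst : 8 * sd * w ^ 2 / l * dsum h B bterm <= 8 * (L / 10) * sd * w ^ 2 * A).
{ replace (8 * (L / 10) * sd * w ^ 2 * A) with (8 * sd * w ^ 2 / l * (L / 10 * A * l))
    by (field; lra).
  apply Rmult_le_compat_l; [|lra].
  apply Rle_mult_inv_pos; [pose proof (pow2_ge_0 w); nra|lra]. }
assert (w * dsum h B (fun i' k' => xs i' k' * ys i' k')
        <= w * (4 * exp 1 * sqrt (L / 10) * q ^ 3 * sqrt (N * nbr_mass n h B adjH a i)))
  by (apply Rmult_le_compat_l; lra).
unfold vertex_cost. fold A N w sd q. lra.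
Qed.

End BadVertex.

Definition pot_sum n h d adjH B a e (T : nat -> nat -> bool) : R :=
  dsum h B (fun i k => dsum h B (fun i' k' =>
    if T i k && T i' k' then edge_term n h d adjH a e i k i' k' else 0)).

Definition cost_sum n h d B adjH L a (T : nat -> nat -> bool) : R :=
  dsum h B (fun i k => if T i k then vertex_cost n h d B adjH L a i k else 0).

Definition card h B (T : nat -> nat -> bool) : R := dsum h B (fun i k => if T i k then 1 else 0).

Definition remove (T : nat -> nat -> bool) i0 k0 : nat -> nat -> bool :=
  fun i k => T i k && negb (Nat.eqb i i0 && Nat.eqb k k0).

Lemma dsum_remove h B (T : nat -> nat -> bool) i0 k0 (f : nat -> nat -> R) :
  (i0 < h)%nat -> (k0 < B)%nat -> T i0 k0 = true ->
  dsum h B (fun i k => if T i k then f i k else 0)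
  - dsum h B (fun i k => if remove T i0 k0 i k then f i k else 0) = f i0 k0.
Proof.
intros Hi Hk HT. rewrite <- dsum_minus, <- (dsum_delta h B f i0 k0) by assumption.
apply dsum_ext. intros i k _ _. unfold remove.
destruct (Nat.eqb_spec i i0) as [->|]; destruct (Nat.eqb_spec k k0) as [->|]; simpl;
  rewrite ?HT, ?andb_true_r; simpl; ring.
Qed.

Lemma card_le h B T : card h B T <= INR (h * B).
Proof.
apply Rle_trans with (dsum h B (fun _ _ => 1)).
- apply dsum_le. intros i k _ _. destruct (T i k); lra.
- unfold dsum. rewrite (rsum_ext h _ (fun _ => INR B)) by (intros; rewrite rsum_const; ring).
  rewrite rsum_const, mult_INR. lra.
Qed.

Section Pruning.
Variables (n h d : nat) (adjH : nat -> nat -> bool) (L : R) (B : nat)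
  (a : nat -> nat -> nat) (e : nat -> nat -> nat -> nat -> nat).
Hypotheses (Hn : (1 <= n)%nat) (Hd : (2 <= d)%nat) (HH : d_regular h d adjH) (HL : 0 < L)
  (He : forall i k i' k', gadj n h d adjH i k i' k' = true ->
          e i k i' k' = e i' k' i k /\ (e i k i' k' <= Nat.min (a i k) (a i' k'))%nat)
  (HaN : forall i k, (i < h)%nat -> (k < B)%nat -> INR (a i k) <= INR n).

Lemma edge_term_sym i k i' k' :
  (1 <= h)%nat -> edge_term n h d adjH a e i k i' k' = edge_term n h d adjH a e i' k' i k.
Proof.
intros Hh. unfold edge_term. rewrite (gadj_sym n h d adjH Hn Hh Hd i k i' k' HH).
destruct (gadj n h d adjH i' k' i k) eqn:G; [|reflexivity].
rewrite (proj1 (He i' k' i k G)). unfold Rdiv; ring.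
Qed.

(* By symmetry of [edge_term] (and its vanishing on the diagonal), the pairs
   through (i0, k0) contribute twice. *)
Lemma pot_sum_remove (T : nat -> nat -> bool) i0 k0 :
  (i0 < h)%nat -> (k0 < B)%nat -> T i0 k0 = true ->
  pot_sum n h d adjH B a e T - pot_sum n h d adjH B a e (remove T i0 k0)
  = 2 * dsum h B (fun i' k' => if T i' k' then edge_term n h d adjH a e i0 k0 i' k' else 0).
Proof.
intros Hi Hk HT. assert (Hh : (1 <= h)%nat) by lia. unfold pot_sum. rewrite <- dsum_minus.
set (G := edge_term n h d adjH a e).
assert (Hdiag : forall i k, G i k i k = 0)
  by (intros; unfold G, edge_term; rewrite gadj_irrefl; [reflexivity|assumption]).
rewrite (dsum_ext h B _ (fun i k =>
    (if Nat.eqb i i0 && Nat.eqb k k0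
     then dsum h B (fun i' k' => if T i' k' then G i k i' k' else 0) else 0)
    + (if T i k then G i k i0 k0 else 0))).
- rewrite dsum_plus, dsum_delta by assumption.
  rewrite (dsum_ext h B (fun i k => if T i k then G i k i0 k0 else 0)
                        (fun i k => if T i k then G i0 k0 i k else 0)); [ring|].
  intros i k _ _. unfold G. rewrite (edge_term_sym i0 k0 i k Hh). reflexivity.
- intros i k Hi' Hk'. rewrite <- dsum_minus.
  rewrite <- (dsum_delta h B (fun i' k' => if T i k then G i k i' k' else 0) i0 k0) by assumption.
  rewrite <- dsum_if, <- dsum_plus. apply dsum_ext. intros i' k' _ _.
  unfold remove.
  destruct (Nat.eqb_spec i i0) as [->|]; destruct (Nat.eqb_spec k k0) as [->|];
  destruct (Nat.eqb_spec i' i0) as [->|]; destruct (Nat.eqb_spec k' k0) as [->|]; simpl;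
  rewrite ?HT, ?andb_true_r, ?andb_false_r, ?Hdiag; simpl;
  repeat match goal with |- context [T ?x ?y] => destruct (T x y) end; simpl;
  rewrite ?Hdiag; ring.
Qed.

Lemma greedy_pruning (T : nat -> nat -> bool) :
  (forall i k, T i k = true -> (i < h)%nat /\ (k < B)%nat) ->
  exists S : nat -> nat -> bool,
    (forall i k, (i < h)%nat -> S i k = true -> good_vertex n h d adjH L a e S i k) /\
    Rabs (/ 2 * pot_sum n h d adjH B a e T - / 2 * pot_sum n h d adjH B a e S)
    <= cost_sum n h d B adjH L a T - cost_sum n h d B adjH L a S.
Proof.
intros HT. pose proof (card_le h B T) as Hcard. revert T HT Hcard.
generalize (h * B)%nat as m. induction m as [|m IH]; intros T HT Hcard.
all: destruct (classic (forall i k, (i < h)%nat -> T i k = true ->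
                          good_vertex n h d adjH L a e T i k)) as [Hgood|Hbad];
  [exists T; split; [exact Hgood|]; rewrite !Rminus_diag, Rabs_R0; lra|].
all: apply not_all_ex_not in Hbad as [i0 Hbad]; apply not_all_ex_not in Hbad as [k0 Hbad];
  apply imply_to_and in Hbad as [Hi0 Hbad]; apply imply_to_and in Hbad as [HT0 Hbad];
  destruct (HT _ _ HT0) as [_ Hk0].
all: assert (Hcard1 : card h B T - card h B (remove T i0 k0) = 1)
       by (apply (dsum_remove h B T i0 k0 (fun _ _ => 1)); assumption).
- assert (0 <= card h B (remove T i0 k0))
    by (apply dsum_nonneg; intros i k _ _; destruct (remove T i0 k0 i k); lra).
  simpl in Hcard. lra.
- destruct (IH (remove T i0 k0)) as [S [HS Hpot]].
  + intros i k HR. apply andb_prop in HR as [HR _]. apply HT; assumption.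
  + rewrite S_INR in Hcard. lra.
  + exists S. split; [exact HS|].
    assert (Ha0 : a i0 k0 <> 0%nat) by (intros Ha; apply Hbad, good_vertex_empty, Ha).
    pose proof (pot_sum_remove T i0 k0 Hi0 Hk0 HT0) as HY.
    pose proof (dsum_remove h B T i0 k0 (vertex_cost n h d B adjH L a) Hi0 Hk0 HT0) as HF.
    pose proof (bad_vertex_edge_sum_le n h d adjH L B a e T i0 k0 Hn Hd HL HT
      (fun i' k' G => proj2 (He i0 k0 i' k' G)) Hi0 (HaN i0 k0 Hi0 Hk0) Ha0 Hbad) as HV.
    set (D := dsum h B (fun i' k' => if T i' k' then edge_term n h d adjH a e i0 k0 i' k' else 0))
      in *.
    pose proof (Rabs_dsum_le h B (fun i' k' =>
      if T i' k' then edge_term n h d adjH a e i0 k0 i' k' else 0)) as Habs. fold D in Habs.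
    set (P := pot_sum n h d adjH B a e) in *.
    replace (/ 2 * P T - / 2 * P S)
      with (/ 2 * (P T - P (remove T i0 k0)) + (/ 2 * P (remove T i0 k0) - / 2 * P S))
      by ring.
    rewrite HY. replace (/ 2 * (2 * D)) with D by field.
    pose proof (Rabs_triang D (/ 2 * P (remove T i0 k0) - / 2 * P S)).
    unfold cost_sum in *. lra.
Qed.

End Pruning.

Lemma sum_nbr_mass n h B d adjH a :
  d_regular h d adjH ->
  rsum h (nbr_mass n h B adjH a) = INR d * rsum h (row_mass n h B a).
Proof.
intros [Hsym [_ [_ Hdeg]]]. unfold nbr_mass.
rewrite (rsum_comm h h (fun i i' => if adjH i i' then row_mass n h B a i' else 0)).
rewrite <- rsum_scal. apply rsum_ext. intros i' Hi'.
rewrite (rsum_ext h _ (fun i => row_mass n h B a i' * (if adjH i' i then 1 else 0)))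
  by (intros i _; rewrite Hsym; destruct (adjH i' i); ring).
rewrite rsum_scal, rsum_count, Hdeg by assumption. ring.
Qed.

Lemma row_cube_sum_le n h B (a : nat -> nat -> nat) i :
  (1 <= n)%nat -> (1 <= h)%nat -> (forall k, (k < B)%nat -> INR (a i k) <= INR n) ->
  rsum B (fun k => weight n h k * root4 (INR (a i k) / INR n) ^ 3)
  <= 7 * sqrt (row_mass n h B a i / INR n).
Proof.
intros Hn Hh HaN. assert (HN : 1 <= INR n) by (apply (le_INR 1); lia).
eapply Rle_trans; [apply dyadic_cube_sum_le; [apply sqrt_nh_pos; assumption|]|].
- intros k Hk. split; [apply Rle_mult_inv_pos; [apply pos_INR|lra]|].
  apply Rmult_le_reg_r with (INR n); [lra|].
  unfold Rdiv; rewrite Rmult_assoc, Rinv_l; specialize (HaN k Hk); lra.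
- right. do 2 f_equal. unfold row_mass.
  rewrite (rsum_ext B _ (fun k => / INR n * (weight n h k ^ 2 * INR (a i k))))
    by (intros; unfold weight, Rdiv; ring).
  rewrite rsum_scal. unfold Rdiv; ring.
Qed.

(* sqrt (n Z_i) * 7 sqrt (R_i / n) = 7 sqrt ((Z_i / sqrt d) (sqrt d R_i)); then AM-GM
   and sum_i Z_i = d sum_i R_i. *)
Lemma nbr_row_cube_sum_le n h d adjH B a :
  (1 <= n)%nat -> (1 <= d)%nat -> d_regular h d adjH ->
  (forall i k, (i < h)%nat -> (k < B)%nat -> INR (a i k) <= INR n) ->
  rsum h (fun i => sqrt (INR n * nbr_mass n h B adjH a i)
                   * rsum B (fun k => weight n h k * root4 (INR (a i k) / INR n) ^ 3))
  <= 7 * sqrt (INR d) * rsum h (row_mass n h B a).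
Proof.
intros Hn Hd HH HaN.
set (sd := sqrt (INR d)). set (N := INR n).
assert (Hsd : 0 < sd) by (apply sqrt_INR_pos; assumption).
assert (HN : 1 <= N) by (apply (le_INR 1); lia).
apply Rle_trans with
  (rsum h (fun i => 7 / 2 * (nbr_mass n h B adjH a i / sd + sd * row_mass n h B a i))).
- apply rsum_le. intros i Hi.
  set (Z := nbr_mass n h B adjH a i). set (R := row_mass n h B a i).
  assert (0 <= Z) by apply nbr_mass_nonneg. assert (0 <= R) by apply row_mass_nonneg.
  apply Rle_trans with (sqrt (N * Z) * (7 * sqrt (R / N))).
  { apply Rmult_le_compat_l; [apply sqrt_pos|].
    apply row_cube_sum_le; [assumption|lia|intros; apply HaN; assumption]. }
  replace (sqrt (N * Z) * (7 * sqrt (R / N))) with (7 * sqrt (Z / sd * (sd * R))).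
  + pose proof (sqrt_mult_le_avg (Z / sd) (sd * R)
      ltac:(apply Rle_mult_inv_pos; lra) ltac:(nra)). lra.
  + replace (Z / sd * (sd * R)) with ((N * Z) * (R / N)) by (field; lra).
    rewrite sqrt_mult by (try apply Rle_mult_inv_pos; nra). ring.
- rewrite rsum_scal, rsum_plus, rsum_scal.
  rewrite (rsum_ext h (fun i => nbr_mass n h B adjH a i / sd)
             (fun i => / sd * nbr_mass n h B adjH a i)) by (intros; unfold Rdiv; ring).
  rewrite rsum_scal, (sum_nbr_mass n h B d adjH a HH).
  replace (INR d) with (sd * sd) by (apply sqrt_sqrt, pos_INR).
  right; field; lra.
Qed.

Lemma cost_sum_full_le n h d adjH L B a :
  (1 <= n)%nat -> (2 <= d)%nat -> d_regular h d adjH -> 20 <= L ->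
  (forall i k, (i < h)%nat -> (k < B)%nat -> INR (a i k) <= INR n) ->
  rsum h (row_mass n h B a) <= 10 ->
  dsum h B (vertex_cost n h d B adjH L a) <= 150 * L * sqrt (INR d).
Proof.
intros Hn Hd HH HL HaN Hmass. unfold vertex_cost. rewrite dsum_plus.
set (sd := sqrt (INR d)). set (c := L / 10). set (M := rsum h (row_mass n h B a)).
assert (Hsd : 0 < sd) by (apply sqrt_INR_pos; lia).
assert (HM : 0 <= M) by (apply rsum_nonneg; intros; apply row_mass_nonneg).
set (X := rsum h (fun i => sqrt (INR n * nbr_mass n h B adjH a i)
   * rsum B (fun k => weight n h k * root4 (INR (a i k) / INR n) ^ 3))).
assert (E1 : dsum h B (fun i k => 8 * c * sd * weight n h k ^ 2 * INR (a i k)) = 8 * c * sd * M).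
{ rewrite (dsum_ext h B _ (fun i k => (8 * c * sd) * (weight n h k ^ 2 * INR (a i k))))
    by (intros; ring).
  apply dsum_scal. }
assert (E2 : dsum h B (fun i k => weight n h k * (4 * exp 1 * sqrt c
    * root4 (INR (a i k) / INR n) ^ 3 * sqrt (INR n * nbr_mass n h B adjH a i)))
    = 4 * exp 1 * sqrt c * X).
{ unfold X. rewrite <- rsum_scal. apply rsum_ext. intros i _.
  rewrite <- !rsum_scal. apply rsum_ext; intros; ring. }
rewrite E1, E2.
pose proof (nbr_row_cube_sum_le n h d adjH B a Hn ltac:(lia) HH HaN) as Hcube.
fold sd M X in Hcube.
assert (Hc : sqrt c <= L / 14)
  by (rewrite <- (sqrt_square (L / 14)) by lra; apply sqrt_le_1_alt; unfold c; nra).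
pose proof exp_le_3. pose proof (exp_pos 1). pose proof (sqrt_pos c).
assert (4 * exp 1 * sqrt c * (7 * sd * M) <= 4 * 3 * (L / 14) * (7 * sd * 10)).
{ apply Rmult_le_compat; [nra|nra| |].
  - apply Rmult_le_compat; lra.
  - apply Rmult_le_compat_l; [lra|exact Hmass]. }
assert (4 * exp 1 * sqrt c * X <= 4 * exp 1 * sqrt c * (7 * sd * M))
  by (apply Rmult_le_compat_l; [nra|exact Hcube]).
assert (8 * c * sd * M <= 8 * c * sd * 10)
  by (apply Rmult_le_compat_l; [unfold c; nra|exact Hmass]).
assert (0 <= L * sd) by nra.
unfold c in *. lra.
Qed.

Lemma vertex_cost_nonneg n h d B adjH L a i k : 0 <= L -> 0 <= vertex_cost n h d B adjH L a i k.
Proof.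
intros HL. unfold vertex_cost.
pose proof (weight_nonneg n h k); pose proof (sqrt_pos (INR d)); pose proof (pos_INR (a i k)).
pose proof (exp_pos 1); pose proof (sqrt_pos (L / 10)).
pose proof (sqrt_pos (INR n * nbr_mass n h B adjH a i)).
pose proof (pow2_ge_0 (weight n h k)).
assert (0 <= root4 (INR (a i k) / INR n) ^ 3) by (apply pow_le, sqrt_pos).
set (w := weight n h k) in *. set (r3 := root4 (INR (a i k) / INR n) ^ 3) in *.
clearbody w r3. apply Rplus_le_le_0_compat; repeat apply Rmult_le_pos; lra.
Qed.

Lemma potency_sub_pattern n h d adjH B a e S :
  potency n h d adjH B (sub_a S a) (sub_e S e) = Rabs (/ 2 * pot_sum n h d adjH B a e S).
Proof.
unfold potency, pot_sum, dsum. do 2 f_equal.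
do 4 (apply rsum_ext; intros).
unfold sub_a, sub_e, edge_term.
destruct (S _ _), (S _ _), (gadj _ _ _ _ _ _ _ _); simpl; unfold Rdiv; ring.
Qed.

Lemma potency_full n h d adjH B a e (T : nat -> nat -> bool) :
  (forall i k, (i < h)%nat -> (k < B)%nat -> T i k = true) ->
  potency n h d adjH B a e = Rabs (/ 2 * pot_sum n h d adjH B a e T).
Proof.
intros HT. unfold potency, pot_sum, dsum. do 2 f_equal.
apply rsum_ext; intros i Hi; apply rsum_ext; intros k Hk;
  apply rsum_ext; intros i' Hi'; apply rsum_ext; intros k' Hk'.
rewrite (HT i k), (HT i' k') by assumption. reflexivity.
Qed.

Lemma pattern_entry_le n h d adjH k0 a e :
  is_pattern n h d adjH k0 a e ->
  forall i k, (i < h)%nat -> (k < k0 + d + 1)%nat -> INR (a i k) <= INR n.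
Proof.
intros [_ [_ [Hrow _]]] i k Hi Hk. eapply Rle_trans; [|apply (Hrow i Hi)].
apply (rsum_term_le _ (fun k => INR (a i k))); [intros; apply pos_INR|assumption].
Qed.

Theorem proposition6p3 (n h d : nat) (adjH : nat -> nat -> bool) (L : R)
  (Hn : (1 <= n)%nat) (Hd : (2 <= d)%nat) (HH : d_regular h d adjH)
  (HL : 20 <= L)
  (k0 : nat) (a : nat -> nat -> nat) (e : nat -> nat -> nat -> nat -> nat)
  (Hpat : is_pattern n h d adjH k0 a e) :
  exists S : nat -> nat -> bool,
    potency n h d adjH (k0 + d + 1) (sub_a S a) (sub_e S e)
      >= potency n h d adjH (k0 + d + 1) a e - 150 * L * sqrt (INR d) /\
    forall i k, (i < h)%nat -> S i k = true ->
      rsum h (fun i' => rsum (k + d + 1) (fun k' =>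
        if gadj n h d adjH i k i' k' && S i' k'
        then INR (a i k) * INR (a i' k') / INR n * bfun (eps n a e i k i' k')
        else 0))
      >= (if Nat.eqb (a i k) 0 then 0
          else L / 10 * INR (a i k) * ln (exp 1 * INR n / INR (a i k))).
Proof.
pose proof (pattern_entry_le n h d adjH k0 a e Hpat) as HaN.
destruct Hpat as [_ [_ [_ [Hmass He]]]].
set (B := (k0 + d + 1)%nat) in *.
set (box i k := Nat.ltb i h && Nat.ltb k B).
assert (Hbox : forall i k, box i k = true <-> (i < h)%nat /\ (k < B)%nat).
{ intros i k. unfold box. rewrite andb_true_iff, !Nat.ltb_lt. reflexivity. }
destruct (greedy_pruning n h d adjH L B a e Hn Hd HH ltac:(lra) He HaN box
            (fun i k => proj1 (Hbox i k))) as [S [Hgood Hpot]].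
exists S. split; [|exact Hgood].
rewrite potency_sub_pattern, (potency_full n h d adjH B a e box)
  by (intros i k Hi Hk; apply Hbox; split; assumption).
assert (Hcost_box : cost_sum n h d B adjH L a box <= 150 * L * sqrt (INR d)).
{ eapply Rle_trans; [|apply (cost_sum_full_le n h d adjH L B a); assumption].
  right. apply dsum_ext. intros i k Hi Hk. rewrite (proj2 (Hbox i k)) by (split; assumption).
  reflexivity. }
assert (Hcost_S : 0 <= cost_sum n h d B adjH L a S).
{ apply dsum_nonneg. intros i k _ _. destruct (S i k); [apply vertex_cost_nonneg; lra|lra]. }
pose proof (Rabs_triang_inv (/ 2 * pot_sum n h d adjH B a e box)
  (/ 2 * pot_sum n h d adjH B a e S)).
lra.
Qed.
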